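(* For every $\lambda\in\mathbb C$ and every integer $d>1$ there exists a real matrix $M$ with all entries non-negative whose Jordan decomposition contains a Jordan block with eigenvalue $\lambda$ of size $d$. *)

From HB Require Import structures.
From mathcomp Require Import all_boot all_order all_algebra.
From mathcomp Require Import complex.
From mathcomp Require Import reals.
Set Implicit Arguments. Unset Strict Implicit. Unset Printing Implicit Defensive.
Import Order.TTheory GRing.Theory Num.Theory.
Local Open Scope ring_scope.

Definition jordan_block (F : nzRingType) (d : nat) (lam : F) : 'M[F]_d :=
  \matrix_(i < d, j < d)
    (if i == j then lam else if j == i.+1 :> nat then 1 else 0).

Definition nonneg_mx (R : realType) (m n : nat) (M : 'M[R]_(m, n)) : Prop :=
  forall i j, 0 <= M i j.

(* A complex square matrix A "has a Jordan block J_d(lam) in its Jordan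
   decomposition": A is similar (over C) to a block-diagonal matrix
   diag(J_d(lam), N).  By uniqueness of the Jordan form, this holds iff the
   Jordan form of A contains a block of size d with eigenvalue lam. *)
Definition has_jordan_block (C : fieldType) (d m : nat) (A : 'M[C]_(d + m))
  (lam : C) : Prop :=
  exists (P : 'M[C]_(d + m)) (N : 'M[C]_m),
    P \in unitmx /\ invmx P *m A *m P = block_mx (jordan_block d lam) 0 0 N.

From HB Require Import structures.
From mathcomp Require Import all_boot all_order all_algebra.
From mathcomp Require Import complex mxtens reals.
From mathcomp Require Import lra.
Set Implicit Arguments. Unset Strict Implicit. Unset Printing Implicit Defensive.
Import Order.TTheory GRing.Theory Num.Theory.
Local Open Scope ring_scope.

(* The cyclic shift C of a 4-dimensional space is diagonalised by the
   Vandermonde matrix of the fourth roots of unity i, -1, -i, 1.  Splitting the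
   real and imaginary parts of lam into positive and negative parts writes
   lam = p(i) for a polynomial p with non-negative real coefficients, so p(C) is
   a non-negative real matrix with eigenvalue lam.  Then
   p(C) (x) I_d + I_4 (x) J_d(0) is non-negative and similar to
   diag(p(i), p(-1), p(-i), p(1)) (x) I_d + I_4 (x) J_d(0), whose first diagonal
   block is J_d(lam). *)

Section NonnegMx.
Variable R : realType.

Lemma nonneg_mxD m n (A B : 'M[R]_(m, n)) :
  nonneg_mx A -> nonneg_mx B -> nonneg_mx (A + B).
Proof. by move=> A_ge0 B_ge0 i j; rewrite mxE addr_ge0. Qed.

Lemma nonneg_mxZ m n c (A : 'M[R]_(m, n)) :
  0 <= c -> nonneg_mx A -> nonneg_mx (c *: A).
Proof. by move=> c_ge0 A_ge0 i j; rewrite mxE mulr_ge0. Qed.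

Lemma nonneg_mxM m n p (A : 'M[R]_(m, n)) (B : 'M[R]_(n, p)) :
  nonneg_mx A -> nonneg_mx B -> nonneg_mx (A *m B).
Proof.
by move=> A_ge0 B_ge0 i j; rewrite mxE sumr_ge0 // => k _; rewrite mulr_ge0.
Qed.

Lemma nonneg_scalar_mx n c : 0 <= c -> nonneg_mx (c%:M : 'M[R]_n).
Proof. by move=> c_ge0 i j; rewrite mxE mulrn_wge0. Qed.

Lemma nonneg_tensmx m n p q (A : 'M[R]_(m, n)) (B : 'M[R]_(p, q)) :
  nonneg_mx A -> nonneg_mx B -> nonneg_mx (A *t B).
Proof. by move=> A_ge0 B_ge0 i j; rewrite mxE mulr_ge0. Qed.

Lemma nonneg_mxX n (A : 'M[R]_n.+1) k : nonneg_mx A -> nonneg_mx (A ^+ k).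
Proof.
move=> A_ge0; elim: k => [|k IHk]; first exact: nonneg_scalar_mx.
by rewrite exprS; apply: nonneg_mxM.
Qed.

Lemma nonneg_horner_mx n (A : 'M[R]_n.+1) (p : {poly R}) :
  (forall k, 0 <= p`_k) -> nonneg_mx A -> nonneg_mx (horner_mx A p).
Proof.
move=> p_ge0 A_ge0; rewrite -[p]coefK poly_def rmorph_sum /=.
apply: (big_ind (@nonneg_mx R _ _)) => [i j|B C|k _]; first by rewrite mxE.
  exact: nonneg_mxD.
rewrite linearZ /= rmorphXn /= horner_mx_X.
exact/nonneg_mxZ/nonneg_mxX.
Qed.

Lemma nonneg_jordan_block d (a : R) : 0 <= a -> nonneg_mx (jordan_block d a).
Proof. by move=> a_ge0 i j; rewrite mxE; case: eqP => _; [|case: eqP => _]. Qed.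

End NonnegMx.

Definition cycle_mx (R : nzSemiRingType) n : 'M[R]_n :=
  \matrix_(i, j) (j == ordS i)%:R.

Lemma nonneg_cycle_mx (R : realType) n : nonneg_mx (cycle_mx R n).
Proof. by move=> i j; rewrite mxE ler0n. Qed.

Lemma map_cycle_mx (aR rR : nzSemiRingType) (f : {rmorphism aR -> rR}) n :
  map_mx f (cycle_mx aR n) = cycle_mx rR n.
Proof. by apply/matrixP => i j; rewrite !mxE rmorph_nat. Qed.

Lemma mul_cycle_mx (R : nzSemiRingType) m n (A : 'M[R]_(m, n)) i j :
  (cycle_mx R m *m A) i j = A (ordS i) j.
Proof.
rewrite mxE (bigD1 (ordS i)) //= big1 => [|k /negbTE nk]; rewrite mxE.
  by rewrite eqxx mul1r addr0.
by rewrite nk mul0r.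
Qed.

Lemma cycle_mx_Vandermonde (R : comNzRingType) n (a : 'rV[R]_n.+1) :
  (forall j, a 0 j ^+ n.+1 = 1) ->
  cycle_mx R n.+1 *m Vandermonde n.+1 a = Vandermonde n.+1 a *m diag_mx a.
Proof.
move=> a_unity; apply/matrixP => i j.
by rewrite mul_cycle_mx mul_mx_diag !mxE /= expr_mod // exprSr.
Qed.

Lemma Vandermonde_unitmx (F : fieldType) n (a : 'rV[F]_n) :
  injective (a 0) -> Vandermonde n a \in unitmx.
Proof.
move=> a_inj; rewrite unitmxE det_Vandermonde unitfE.
apply/prodf_neq0 => i _; apply/prodf_neq0 => j lt_ij.
by rewrite subr_eq0; apply: contraTneq lt_ij => /a_inj ->; rewrite ltnn.
Qed.

Lemma horner_mx_intertwine (R : comNzRingType) m n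
    (A : 'M[R]_m.+1) (B : 'M[R]_n.+1) (P : 'M[R]_(m.+1, n.+1)) (p : {poly R}) :
  A *m P = P *m B -> horner_mx A p *m P = P *m horner_mx B p.
Proof.
move=> AP_PB; elim/poly_ind: p => [|p c IHp].
  by rewrite !rmorph0 mul0mx mulmx0.
rewrite !rmorphD !rmorphM /= !horner_mx_X !horner_mx_C -!mulmxE.
by rewrite mulmxDl mulmxDr -mulmxA AP_PB mulmxA IHp -mulmxA scalar_mxC.
Qed.

Section CycleDiagonalization.
Variables (F : fieldType) (n : nat) (w : F).
Hypothesis w_prim : n.+1.-primitive_root w.

(* Exponents start at 1 so that the first eigenvalue is w itself. *)
Let a : 'rV[F]_n.+1 := \row_j w ^+ j.+1.

Lemma Vandermonde_prim_root_unitmx : Vandermonde n.+1 a \in unitmx.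
Proof.
apply: Vandermonde_unitmx => i j /eqP.
rewrite !mxE (eq_prim_root_expr w_prim) -[i.+1]addn1 -[j.+1]addn1.
by rewrite eqn_modDr !modn_small // => /eqP/val_inj.
Qed.

Lemma horner_cycle_mx_diag (p : {poly F}) :
  horner_mx (cycle_mx F n.+1) p *m Vandermonde n.+1 a
  = Vandermonde n.+1 a *m diag_mx (map_mx (horner p) a).
Proof.
rewrite -horner_mx_diag; apply/horner_mx_intertwine/cycle_mx_Vandermonde => j.
by rewrite mxE exprAC (prim_expr_order w_prim) expr1n.
Qed.

End CycleDiagonalization.

Lemma map_jordan_block (aR rR : nzRingType) (f : {rmorphism aR -> rR}) d a :
  map_mx f (jordan_block d a) = jordan_block d (f a).
Proof.
apply/matrixP => i j; rewrite !mxE.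
by case: eqP => _; [|case: eqP => _]; rewrite ?rmorph0 ?rmorph1.
Qed.

Lemma has_jordan_block_intertwine (F : fieldType) d m (A P : 'M[F]_(d + m)) N lam :
  P \in unitmx -> A *m P = P *m block_mx (jordan_block d lam) 0 0 N ->
  has_jordan_block A lam.
Proof. by move=> P_unit AP_PB; exists P, N; rewrite -mulmxA AP_PB mulKmx. Qed.

Lemma lshift_mxtens_index k d (i : 'I_d) :
  lshift (k * d) i = mxtens_index (ord0 : 'I_k.+1, i).
Proof. exact: val_inj. Qed.

Lemma rshift_mxtens_index k d (a : 'I_k) (i : 'I_d) :
  rshift d (mxtens_index (a, i)) = mxtens_index (lift ord0 a, i).
Proof. by apply: val_inj; rewrite /= /bump /= add1n mulSn addnA. Qed.

Lemma tens_diag_jordan_block (R : comNzRingType) k d (v : 'rV[R]_k.+1) :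
  exists N, diag_mx v *t 1%:M + 1%:M *t jordan_block d 0
            = block_mx (jordan_block d (v 0 0)) 0 0 N :> 'M_(d + k * d).
Proof.
set X : 'M_(d + k * d) := _ + _; exists (drsubmx X).
rewrite -[LHS]submxK; congr block_mx; apply/matrixP => i j.
- rewrite !mxE !lshift_mxtens_index !mxtens_indexK /= mul1r.
  by case: eqP => _; rewrite ?mulr1 ?addr0 ?mulr0 ?add0r.
- case: (mxtens_indexP j) => a l.
  rewrite !mxE lshift_mxtens_index rshift_mxtens_index !mxtens_indexK /=.
  by rewrite !mul0r add0r.
- case: (mxtens_indexP i) => a l.
  rewrite !mxE lshift_mxtens_index rshift_mxtens_index !mxtens_indexK /=.
  by rewrite !mul0r addr0.
Qed.

Lemma has_jordan_block_tens (F : fieldType) k d (K P : 'M[F]_k.+1) (v : 'rV[F]_k.+1) :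
  (0 < d)%N -> P \in unitmx -> K *m P = P *m diag_mx v ->
  has_jordan_block (K *t 1%:M + 1%:M *t jordan_block d 0 : 'M_(d + k * d)) (v 0 0).
Proof.
move=> d_gt0 P_unit KP_PD; have [N DJ_block] := tens_diag_jordan_block d v.
have PI_unit : P *t (1%:M : 'M_d) \in unitmx.
  by apply: tensmx_unit; rewrite ?unitmx1 // -lt0n.
apply: (has_jordan_block_intertwine PI_unit (N := N)); rewrite -DJ_block.
(* [tensmx_mul] only rewrites at the type [k.+1 * d] of [*t], which is merely
   convertible to the [d + k * d] of the goal. *)
have intertwine : (K *t 1%:M + 1%:M *t jordan_block d 0) *m (P *t 1%:M)
    = (P *t 1%:M) *m (diag_mx v *t 1%:M + 1%:M *t jordan_block d 0) :> 'M_(k.+1 * d).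
  by rewrite mulmxDl mulmxDr !tensmx_mul !mul1mx !mulmx1 KP_PD.
exact: intertwine.
Qed.

Lemma has_jordan_block_horner_cycle (F : fieldType) n d w (p : {poly F}) :
  n.+1.-primitive_root w -> (0 < d)%N ->
  has_jordan_block (horner_mx (cycle_mx F n.+1) p *t 1%:M + 1%:M *t jordan_block d 0
                    : 'M_(d + n * d)) p.[w].
Proof.
move=> w_prim d_gt0; have := has_jordan_block_tens d_gt0
  (Vandermonde_prim_root_unitmx w_prim) (horner_cycle_mx_diag w_prim p).
by rewrite !mxE expr1.
Qed.

Lemma prim_root_i (R : rcfType) : 4.-primitive_root ('i%C : R[i]).
Proof.
have i2 : 'i%C ^+ 2 = -1 :> R[i] by exact: sqr_i.
have i2_neq1 : 'i%C ^+ 2 != 1 :> R[i].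
  by rewrite i2 lt_eqF // (lt_trans (ltrN10 _)) ?ltr01.
apply/andP; split=> //; apply/forallP => -[[|[|[|[|k]]]] //= _];
  rewrite unity_rootE /= ?eqbF_neg ?eqb_id.
- by apply: contraNneq i2_neq1; rewrite expr1 => ->; rewrite expr1n.
- by rewrite i2_neq1.
- rewrite exprS i2 mulrN1; apply: contraNneq i2_neq1 => /(congr1 -%R).
  by rewrite opprK => ->; rewrite sqrrN expr1n.
- by rewrite (exprM _ 2 2) i2 sqrrN expr1n.
Qed.

Lemma nonneg_poly_eval_i (R : rcfType) (z : R[i]) :
  exists2 p : {poly R},
    forall k, 0 <= p`_k & (map_poly (real_complex R) p).['i%C] = z.
Proof.
case: z => x y; pose pos (r : R) : R := Num.max r 0.
have pos_ge0 r : 0 <= pos r by rewrite le_max lexx orbT.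
have posE r : pos r - pos (- r) = r.
  by rewrite /pos; case: (leP r 0); case: (leP (- r) 0); lra.
exists (Poly [:: pos x; pos y; pos (- x); pos (- y)]).
  by move=> k; rewrite coef_Poly; case: k => [|[|[|[|k]]]] //=; rewrite nth_nil.
rewrite map_Poly_id0 ?rmorph0 // horner_Poly /=.
by simpc; rewrite ![- _ + _]addrC !posE.
Qed.

Theorem lemma8 (R : realType) (lam : R[i]) (d : nat) (hd : (1 < d)%N) :
  exists (m : nat) (M : 'M[R]_(d + m)),
    nonneg_mx M /\
    has_jordan_block (map_mx (fun x : R => Complex x 0) M) lam.
Proof.
have [p p_ge0 <-] := nonneg_poly_eval_i lam.
set M := horner_mx (cycle_mx R 4) p *t 1%:M + 1%:M *t jordan_block d 0.
have M_ge0 : nonneg_mx M.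
  apply: nonneg_mxD; apply: nonneg_tensmx.
  - exact/nonneg_horner_mx/nonneg_cycle_mx.
  - exact: nonneg_scalar_mx.
  - exact: nonneg_scalar_mx.
  - exact: nonneg_jordan_block.
exists (3 * d)%N, M; split=> //.
rewrite [map_mx _ M](_ : _ = map_mx (real_complex R) M) //.
rewrite map_mxD !map_mxT map_horner_mx map_cycle_mx !map_mx1 map_jordan_block rmorph0.
exact: has_jordan_block_horner_cycle (prim_root_i R) (ltnW hd).
Qed.
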